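(* Let $I\subset\mathbb{Z}$ be an interval and let $\vec r,\vec{\bar r}:I\to\mathbb{R}^2$ be two nondegenerate discrete planar curves whose first and second centroaffine curvatures coincide at corresponding points, i.e. $\kappa_k(\vec r)=\kappa_k(\vec{\bar r})$ and $\bar\kappa_k(\vec r)=\bar\kappa_k(\vec{\bar r})$ for every $k$ at which they are defined. Then there exist a matrix $A\in GL(2,\mathbb{R})$ and a constant vector $\vec C\in\mathbb{R}^2$ such that $\vec r(k)=A\,\vec{\bar r}(k)+\vec C$ for all $k\in I$; i.e. the two curves are affinely equivalent.
   Context: A discrete planar curve is a map $\vec r:I\to\mathbb{R}^2$, $I\subset\mathbb{Z}$ an interval (possibly infinite, containing at least three consecutive integers); write $\vec r_k=\vec r(k)$ and $\vec t_k=\vec r_{k+1}-\vec r_k$ (edge tangent vector). $[\vec a,\vec b]$ denotes the $2\times 2$ determinant. The curve is nondegenerate if $[\vec t_{k-1},\vec t_k]\neq 0$ whenever $k-1,k,k+1\in I$. Its first and second centroaffine curvatures at $k$ (whenever $k-1,k,k+1,k+2\in I$) are $\kappa_k=\frac{[\vec t_k,\vec t_{k+1}]}{[\vec t_{k-1},\vec t_k]}$ and $\bar\kappa_k=\frac{[\vec t_{k-1},\vec t_{k+1}]}{[\vec t_{k-1},\vec t_k]}$. *)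

From Stdlib Require Import Reals ZArith.
Open Scope R_scope.

Definition vec2 : Type := (R * R)%type.

Definition det2 (a b : vec2) : R := fst a * snd b - snd a * fst b.

(* A discrete planar curve is a map Z -> R^2; only its values on the
   index interval I matter. *)
Definition curve : Type := Z -> vec2.

Definition is_Z_interval (I : Z -> Prop) : Prop :=
  forall a b c : Z, (a <= b <= c)%Z -> I a -> I c -> I b.

Definition tangent (r : curve) (k : Z) : vec2 :=
  (fst (r (k + 1)%Z) - fst (r k), snd (r (k + 1)%Z) - snd (r k)).

Definition nondegenerate (I : Z -> Prop) (r : curve) : Prop :=
  forall k : Z, I (k - 1)%Z -> I k -> I (k + 1)%Z ->
    det2 (tangent r (k - 1)%Z) (tangent r k) <> 0.

Definition kappa (r : curve) (k : Z) : R :=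
  det2 (tangent r k) (tangent r (k + 1)%Z) /
  det2 (tangent r (k - 1)%Z) (tangent r k).

Definition kappa_bar (r : curve) (k : Z) : R :=
  det2 (tangent r (k - 1)%Z) (tangent r (k + 1)%Z) /
  det2 (tangent r (k - 1)%Z) (tangent r k).

Record mat2 : Type := Mat2 { m11 : R; m12 : R; m21 : R; m22 : R }.

Definition mat2_det (A : mat2) : R := m11 A * m22 A - m12 A * m21 A.

Definition affine_apply (A : mat2) (C v : vec2) : vec2 :=
  (m11 A * fst v + m12 A * snd v + fst C,
   m21 A * fst v + m22 A * snd v + snd C).

(* Cramer's rule in the basis t_{k-1}, t_k gives the three-term recurrence
   t_{k+1} = kbar_k t_k - kappa_k t_{k-1}, whose coefficients are exactly the
   two centroaffine curvatures; since kappa_k <> 0 by nondegeneracy, it can be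
   run backwards as well.  Both curves thus obey the same recurrence, so the
   linear map A sending two consecutive tangents of rb to those of r sends every
   tangent of rb to the corresponding tangent of r, and r - A rb is constant. *)

From Stdlib Require Import Reals ZArith Lra Lia.
Open Scope R_scope.

Lemma interval_ind2_up (J P : Z -> Prop) (k0 : Z) :
  is_Z_interval J ->
  (forall k, J (k - 1)%Z -> J k -> J (k + 1)%Z -> P (k - 1)%Z -> P k -> P (k + 1)%Z) ->
  J k0 -> P k0 -> P (k0 + 1)%Z ->
  forall k, (k0 <= k)%Z -> J k -> P k.
Proof.
  intros HJ step J0 P0 P1.
  assert (pairs : forall n, (0 <= n)%Z -> J (k0 + n + 1)%Z ->
                    P (k0 + n)%Z /\ P (k0 + n + 1)%Z).
  { apply (natlike_ind (fun n => J (k0 + n + 1)%Z -> P (k0 + n)%Z /\ P (k0 + n + 1)%Z)).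
    - rewrite Z.add_0_r; auto.
    - intros n n_ge0 IH Jn2. unfold Z.succ in *.
      assert (Jn1 : J (k0 + n + 1)%Z) by (apply (HJ k0 _ (k0 + (n + 1) + 1)%Z); auto; lia).
      assert (Jn : J (k0 + n)%Z) by (apply (HJ k0 _ (k0 + n + 1)%Z); auto; lia).
      destruct (IH Jn1) as [Pn Pn1].
      replace (k0 + (n + 1))%Z with (k0 + n + 1)%Z by ring.
      split; [exact Pn1|].
      apply step; rewrite ?Z.add_simpl_r; auto.
      replace (k0 + n + 1 + 1)%Z with (k0 + (n + 1) + 1)%Z by ring; exact Jn2. }
  intros k k_ge Jk.
  destruct (Z.eq_dec k k0) as [->|k_ne]; [exact P0|].
  replace k with (k0 + (k - k0 - 1) + 1)%Z in * by ring.
  apply pairs; auto; lia.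
Qed.

Lemma interval_ind2 (J P : Z -> Prop) (k0 : Z) :
  is_Z_interval J ->
  (forall k, J (k - 1)%Z -> J k -> J (k + 1)%Z -> P (k - 1)%Z -> P k -> P (k + 1)%Z) ->
  (forall k, J (k - 1)%Z -> J k -> J (k + 1)%Z -> P k -> P (k + 1)%Z -> P (k - 1)%Z) ->
  J k0 -> J (k0 + 1)%Z -> P k0 -> P (k0 + 1)%Z ->
  forall k, J k -> P k.
Proof.
  intros HJ up down J0 J1 P0 P1 k Jk.
  destruct (Z_le_gt_dec k0 k) as [k_ge|k_lt].
  { exact (interval_ind2_up J P k0 HJ up J0 P0 P1 k k_ge Jk). }
  (* Downward induction is upward induction for the reflected index -k. *)
  set (J' := fun j => J (- j)%Z). set (P' := fun j => P (- j)%Z).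
  replace k with (- - k)%Z by ring.
  apply (interval_ind2_up J' P' (- (k0 + 1))%Z); unfold J', P'.
  - intros a b c hab Ja Jc. apply (HJ (- c)%Z _ (- a)%Z); auto; lia.
  - intros j Jm J0' Jp Pm P0'.
    replace (- (j + 1))%Z with (- j - 1)%Z in * by ring.
    replace (- (j - 1))%Z with (- j + 1)%Z in * by ring.
    apply down; auto.
  - rewrite Z.opp_involutive; exact J1.
  - rewrite Z.opp_involutive; exact P1.
  - replace (- (- (k0 + 1) + 1))%Z with k0 by ring; exact P0.
  - lia.
  - rewrite Z.opp_involutive; exact Jk.
Qed.

Lemma interval_const (T : Type) (J : Z -> Prop) (f : Z -> T) (k0 : Z) :
  is_Z_interval J ->
  (forall k, J k -> J (k + 1)%Z -> f (k + 1)%Z = f k) ->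
  J k0 -> J (k0 + 1)%Z ->
  forall k, J k -> f k = f k0.
Proof.
  intros HJ hf J0 J1.
  apply (interval_ind2 J (fun k => f k = f k0) k0); auto.
  - intros k _ Jk Jk1 _ <-. auto.
  - intros k Jm Jk _ <- _. rewrite <- (hf (k - 1)%Z); rewrite ?Z.sub_add; auto.
Qed.

Definition lincomb (a : R) (u : vec2) (b : R) (v : vec2) : vec2 :=
  (a * fst u + b * fst v, a * snd u + b * snd v).

Definition vsub (u v : vec2) : vec2 := (fst u - fst v, snd u - snd v).

Definition mat2_apply (A : mat2) (v : vec2) : vec2 :=
  (m11 A * fst v + m12 A * snd v, m21 A * fst v + m22 A * snd v).

Lemma mat2_apply_lincomb A a u b v :
  mat2_apply A (lincomb a u b v) = lincomb a (mat2_apply A u) b (mat2_apply A v).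
Proof. unfold mat2_apply, lincomb; simpl; f_equal; ring. Qed.

Lemma affine_apply_vsub A v w : w = affine_apply A (vsub w (mat2_apply A v)) v.
Proof. destruct w; unfold affine_apply, vsub, mat2_apply; simpl; f_equal; ring. Qed.

Lemma vsub_mat2_apply_eq A x x' y y' :
  mat2_apply A (vsub x' x) = vsub y' y -> vsub y' (mat2_apply A x') = vsub y (mat2_apply A x).
Proof.
  unfold mat2_apply, vsub; simpl; intros e; injection e as e1 e2; f_equal; lra.
Qed.

Definition mat2_sending (p q P Q : vec2) : mat2 :=
  let d := det2 p q in
  Mat2 ((fst P * snd q - fst Q * snd p) / d) ((fst Q * fst p - fst P * fst q) / d)
       ((snd P * snd q - snd Q * snd p) / d) ((snd Q * fst p - snd P * fst q) / d).

Lemma mat2_sending_spec p q P Q : det2 p q <> 0 ->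
  mat2_apply (mat2_sending p q P Q) p = P /\ mat2_apply (mat2_sending p q P Q) q = Q.
Proof.
  destruct p, q, P, Q; unfold mat2_sending, mat2_apply, det2; simpl; intros.
  split; f_equal; field; auto.
Qed.

Lemma mat2_det_sending p q P Q : det2 p q <> 0 ->
  mat2_det (mat2_sending p q P Q) = det2 P Q / det2 p q.
Proof. destruct p, q, P, Q; unfold mat2_sending, mat2_det, det2; simpl; intros; field; auto. Qed.

Section Recurrence.

Variables (r : curve) (k : Z).
Hypothesis nondeg : det2 (tangent r (k - 1)) (tangent r k) <> 0.

Lemma tangent_recurrence :
  tangent r (k + 1) =
  lincomb (- kappa r k) (tangent r (k - 1)) (kappa_bar r k) (tangent r k).
Proof.
  revert nondeg; unfold kappa, kappa_bar, lincomb.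
  destruct (tangent r (k - 1)), (tangent r k), (tangent r (k + 1)).
  unfold det2; simpl; intros; f_equal; field; auto.
Qed.

Lemma tangent_recurrence_rev :
  det2 (tangent r k) (tangent r (k + 1)) <> 0 ->
  tangent r (k - 1) =
  lincomb (kappa_bar r k / kappa r k) (tangent r k) (- / kappa r k) (tangent r (k + 1)).
Proof.
  revert nondeg; unfold kappa, kappa_bar, lincomb.
  destruct (tangent r (k - 1)), (tangent r k), (tangent r (k + 1)).
  unfold det2; simpl; intros; f_equal; field; auto.
Qed.

End Recurrence.

Section TangentTransport.

Variables (r rb : curve) (A : mat2) (k : Z).
Hypotheses (nondeg : det2 (tangent r (k - 1)) (tangent r k) <> 0)
           (nondeg_b : det2 (tangent rb (k - 1)) (tangent rb k) <> 0)
           (same_kappa : kappa r k = kappa rb k)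
           (same_kappa_bar : kappa_bar r k = kappa_bar rb k).

Lemma tangent_transport_succ :
  mat2_apply A (tangent rb (k - 1)) = tangent r (k - 1) ->
  mat2_apply A (tangent rb k) = tangent r k ->
  mat2_apply A (tangent rb (k + 1)) = tangent r (k + 1).
Proof.
  intros e_pred e.
  rewrite (tangent_recurrence r k), (tangent_recurrence rb k), mat2_apply_lincomb by auto.
  congruence.
Qed.

Lemma tangent_transport_pred :
  det2 (tangent r k) (tangent r (k + 1)) <> 0 ->
  det2 (tangent rb k) (tangent rb (k + 1)) <> 0 ->
  mat2_apply A (tangent rb k) = tangent r k ->
  mat2_apply A (tangent rb (k + 1)) = tangent r (k + 1) ->
  mat2_apply A (tangent rb (k - 1)) = tangent r (k - 1).
Proof.
  intros nondeg_succ nondeg_b_succ e e_succ.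
  rewrite (tangent_recurrence_rev r k), (tangent_recurrence_rev rb k), mat2_apply_lincomb
    by auto.
  congruence.
Qed.

End TangentTransport.

Lemma nondegenerate_succ I r k :
  nondegenerate I r -> I k -> I (k + 1)%Z -> I (k + 2)%Z ->
  det2 (tangent r k) (tangent r (k + 1)) <> 0.
Proof.
  intros Hr I0 I1 I2. specialize (Hr (k + 1)%Z).
  rewrite Z.add_simpl_r in Hr. replace (k + 1 + 1)%Z with (k + 2)%Z in Hr by ring. auto.
Qed.

Lemma tangent_transport_all I r rb A k0 :
  is_Z_interval I -> nondegenerate I r -> nondegenerate I rb ->
  (forall k, I (k - 1)%Z -> I k -> I (k + 1)%Z -> I (k + 2)%Z ->
     kappa r k = kappa rb k /\ kappa_bar r k = kappa_bar rb k) ->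
  I k0 -> I (k0 + 1)%Z -> I (k0 + 2)%Z ->
  mat2_apply A (tangent rb k0) = tangent r k0 ->
  mat2_apply A (tangent rb (k0 + 1)) = tangent r (k0 + 1) ->
  forall k, I k -> I (k + 1)%Z -> mat2_apply A (tangent rb k) = tangent r k.
Proof.
  intros HI Hr Hrb Hk I0 I1 I2 e0 e1 k Ik Ik1.
  apply (interval_ind2 (fun j => I j /\ I (j + 1)%Z)
           (fun j => mat2_apply A (tangent rb j) = tangent r j) k0);
    try tauto.
  - intros a b c hab [Ia _] [Ic Ic1].
    split; [apply (HI a b c) | apply (HI a (b + 1)%Z (c + 1)%Z)]; auto; lia.
  - intros j [Im _] [Ij _] [Ip Ip1].
    replace (j + 1 + 1)%Z with (j + 2)%Z in Ip1 by ring.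
    destruct (Hk j) as [hk hkb]; auto.
    apply tangent_transport_succ; auto.
  - intros j [Im _] [Ij _] [Ip Ip1].
    replace (j + 1 + 1)%Z with (j + 2)%Z in Ip1 by ring.
    destruct (Hk j) as [hk hkb]; auto.
    apply tangent_transport_pred; try apply (nondegenerate_succ I); auto.
  - replace (k0 + 1 + 1)%Z with (k0 + 2)%Z by ring; tauto.
Qed.

Theorem proposition3p3
  (I : Z -> Prop)
  (HI : is_Z_interval I)
  (H3 : exists k : Z, I k /\ I (k + 1)%Z /\ I (k + 2)%Z)
  (r rb : curve)
  (Hr : nondegenerate I r)
  (Hrb : nondegenerate I rb)
  (Hk : forall k : Z, I (k - 1)%Z -> I k -> I (k + 1)%Z -> I (k + 2)%Z ->
          kappa r k = kappa rb k /\ kappa_bar r k = kappa_bar rb k) :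
  exists (A : mat2) (C : vec2),
    mat2_det A <> 0 /\
    forall k : Z, I k -> r k = affine_apply A C (rb k).
Proof.
  destruct H3 as [k0 [I0 [I1 I2]]].
  assert (nondeg : det2 (tangent r k0) (tangent r (k0 + 1)) <> 0)
    by (apply (nondegenerate_succ I); auto).
  assert (nondeg_b : det2 (tangent rb k0) (tangent rb (k0 + 1)) <> 0)
    by (apply (nondegenerate_succ I); auto).
  set (A := mat2_sending (tangent rb k0) (tangent rb (k0 + 1)) (tangent r k0) (tangent r (k0 + 1))).
  destruct (mat2_sending_spec (tangent rb k0) (tangent rb (k0 + 1))
              (tangent r k0) (tangent r (k0 + 1)) nondeg_b) as [e0 e1].
  pose proof (tangent_transport_all I r rb A k0 HI Hr Hrb Hk I0 I1 I2 e0 e1) as transport.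
  exists A, (vsub (r k0) (mat2_apply A (rb k0))). split.
  - unfold A; rewrite mat2_det_sending by exact nondeg_b.
    unfold Rdiv; apply Rmult_integral_contrapositive_currified; auto using Rinv_neq_0_compat.
  - assert (offset_const : forall k, I k ->
              vsub (r k) (mat2_apply A (rb k)) = vsub (r k0) (mat2_apply A (rb k0))).
    { apply (interval_const _ I (fun j => vsub (r j) (mat2_apply A (rb j))) k0 HI); auto.
      intros k Ik Ik1. apply vsub_mat2_apply_eq, transport; auto. }
    intros k Ik. rewrite <- (offset_const k Ik). apply affine_apply_vsub.
Qed.
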